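(* Let $(X,d)$ be a metric space, $\mathcal{R}$ an arbitrary binary relation on $X$, and $p$ a $w$-distance on $X$ with respect to $\mathcal{R}$. Let $T:X\to X$ satisfy: (1) there exists $Y\subseteq X$ with $T(X)\subseteq Y$ such that $(Y,d)$ is $\mathcal{R}$-complete; (2) $X(T,\mathcal{R})\neq\emptyset$ and $\mathcal{R}$ is $T$-closed; (3) either $T$ is $\mathcal{R}$-continuous, or $\mathcal{R}|_Y$ is $d$-self-closed; (4) there exists $\lambda\in[0,1)$ such that $p(Tx,Ty)\le\lambda\,p(x,y)$ for all $x,y\in X$ with $(x,y)\in\mathcal{R}$. Then $T$ has a fixed point, i.e. $F(T)=\{x\in X: Tx=x\}\neq\emptyset$.
   Context: A binary relation $\mathcal{R}$ on $X$ is a subset of $X\times X$. A sequence $(x_n)$ is $\mathcal{R}$-preserving if $(x_n,x_{n+1})\in\mathcal{R}$ for all $n\in\mathbb{N}\cup\{0\}$. $(Y,d)$ is $\mathcal{R}$-complete if every $\mathcal{R}$-preserving Cauchy sequence in $Y$ converges in $Y$. $X(T,\mathcal{R})=\{x\in X:(x,Tx)\in\mathcal{R}\}$. $\mathcal{R}$ is $T$-closed if $(x,y)\in\mathcal{R}$ implies $(Tx,Ty)\in\mathcal{R}$. $T$ is $\mathcal{R}$-continuous if for every $x\in X$ and every $\mathcal{R}$-preserving sequence $x_n\to x$ one has $Tx_n\to Tx$. $\mathcal{R}|_Y=\mathcal{R}\cap(Y\times Y)$ is $d$-self-closed if for every $\mathcal{R}|_Y$-preserving sequence $(x_n)$ in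 $Y$ with $x_n\to x$ there is a subsequence $(x_{n_k})$ with $(x_{n_k},x)\in\mathcal{R}|_Y$ for all $k$. A function $g:X\to\mathbb{R}\cup\{\pm\infty\}$ is $\mathcal{R}$-lower semi-continuous at $x$ if for every $\mathcal{R}$-preserving sequence $x_n\to x$, $\liminf_n g(x_n)\ge g(x)$. A function $p:X\times X\to[0,\infty)$ is a $w$-distance with respect to $\mathcal{R}$ if: (w1') $p(x,z)\le p(x,y)+p(y,z)$ for all $x,y,z$; (w2') for each $x$, $p(x,\cdot)$ is $\mathcal{R}$-lower semi-continuous at every point; (w3') for every $\epsilon>0$ there is $\delta>0$ such that $p(z,x)\le\delta$ and $p(z,y)\le\delta$ imply $d(x,y)\le\epsilon$. *)

From Stdlib Require Import Reals.
Open Scope R_scope.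

Section Defs.
Context {X : Type}.

Record is_metric (d : X -> X -> R) : Prop := {
  metric_nonneg : forall x y, 0 <= d x y;
  metric_zero : forall x y, d x y = 0 <-> x = y;
  metric_sym : forall x y, d x y = d y x;
  metric_triangle : forall x y z, d x z <= d x y + d y z
}.

Definition rel_preserving (Rel : X -> X -> Prop) (x : nat -> X) : Prop :=
  forall n : nat, Rel (x n) (x (S n)).

Definition d_cauchy (d : X -> X -> R) (x : nat -> X) : Prop :=
  forall eps, 0 < eps -> exists N : nat, forall m n : nat,
    (N <= m)%nat -> (N <= n)%nat -> d (x m) (x n) < eps.

Definition d_converges (d : X -> X -> R) (x : nat -> X) (l : X) : Prop :=
  forall eps, 0 < eps -> exists N : nat, forall n : nat,
    (N <= n)%nat -> d (x n) l < eps.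

Definition rel_complete (d : X -> X -> R) (Rel : X -> X -> Prop)
    (Y : X -> Prop) : Prop :=
  forall x : nat -> X, (forall n, Y (x n)) -> rel_preserving Rel x ->
    d_cauchy d x -> exists l, Y l /\ d_converges d x l.

Definition rel_restrict (Rel : X -> X -> Prop) (Y : X -> Prop) : X -> X -> Prop :=
  fun x y => Rel x y /\ Y x /\ Y y.

Definition T_closed (Rel : X -> X -> Prop) (T : X -> X) : Prop :=
  forall x y, Rel x y -> Rel (T x) (T y).

Definition rel_continuous (d : X -> X -> R) (Rel : X -> X -> Prop)
    (T : X -> X) : Prop :=
  forall (l : X) (x : nat -> X), rel_preserving Rel x -> d_converges d x l ->
    d_converges d (fun n => T (x n)) (T l).

Definition d_self_closed (d : X -> X -> R) (Rel : X -> X -> Prop)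
    (Y : X -> Prop) : Prop :=
  forall (x : nat -> X) (l : X), (forall n, Y (x n)) ->
    rel_preserving (rel_restrict Rel Y) x -> d_converges d x l ->
    exists f : nat -> nat, (forall k, (f k < f (S k))%nat) /\
      forall k, rel_restrict Rel Y (x (f k)) l.

(* liminf_n a_n >= c  (for a real sequence; liminf may be +infinity) *)
Definition liminf_ge (a : nat -> R) (c : R) : Prop :=
  forall eps, 0 < eps -> exists N : nat, forall n : nat, (N <= n)%nat -> c - eps < a n.

Definition rel_lsc_at (d : X -> X -> R) (Rel : X -> X -> Prop)
    (g : X -> R) (l : X) : Prop :=
  forall x : nat -> X, rel_preserving Rel x -> d_converges d x l ->
    liminf_ge (fun n => g (x n)) (g l).

Record is_w_distance (d : X -> X -> R) (Rel : X -> X -> Prop)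
    (p : X -> X -> R) : Prop := {
  wdist_nonneg : forall x y, 0 <= p x y;
  wdist_w1 : forall x y z, p x z <= p x y + p y z;
  wdist_w2 : forall x l, rel_lsc_at d Rel (p x) l;
  wdist_w3 : forall eps, 0 < eps -> exists delta, 0 < delta /\
    forall x y z, p z x <= delta -> p z y <= delta -> d x y <= eps
}.

End Defs.

(* The Picard orbit of a point x0 with (x0, T x0) in Rel is Rel-preserving, and the contraction
   makes its consecutive w-distances decay geometrically, so p (x_n) (x_m) <= C lambda^n for
   n < m.  Property (w3) turns this into the Cauchy property; Rel-completeness of Y provides a
   limit l, and lower semicontinuity of p (x_n) gives p (x_n) l <= C lambda^n.  If T is
   Rel-continuous, l = T l by uniqueness of limits.  Otherwise self-closedness gives a
   subsequence related to l, along which both p (x_(k+1)) l and p (x_(k+1)) (T l) are small,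
   and (w3) again forces d l (T l) = 0. *)
From Stdlib Require Import Reals Lra Lia.
Open Scope R_scope.

Lemma strictly_increasing_ge (f : nat -> nat) :
  (forall k, (f k < f (S k))%nat) -> forall k, (k <= f k)%nat.
Proof. intros Hf k; induction k; [lia|]. specialize (Hf k); lia. Qed.

Lemma geometric_eventually_lt (lam C e : R) :
  0 <= lam < 1 -> 0 < e -> exists N, forall n, (N <= n)%nat -> C * lam ^ n < e.
Proof.
  intros Hlam He.
  destruct (pow_lt_1_zero lam ltac:(rewrite Rabs_pos_eq; lra) (e / (Rabs C + 1)))
    as [N HN].
  { apply Rdiv_lt_0_compat; [lra|]. pose proof (Rabs_pos C); lra. }
  exists N; intros n Hn. specialize (HN n ltac:(lia)).
  rewrite Rabs_pos_eq in HN by (apply pow_le; lra).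
  pose proof (pow_le lam n ltac:(lra)) as Hpow.
  pose proof (Rabs_pos C) as HC.
  apply Rmult_lt_compat_l with (r := Rabs C + 1) in HN; [|lra].
  replace ((Rabs C + 1) * (e / (Rabs C + 1))) with e in HN by (field; lra).
  pose proof (Rle_abs C).
  nra.
Qed.

Section Metric.
Context {X : Type} (d : X -> X -> R) (Hd : is_metric d).

Lemma metric_eq_of_le_all (a b : X) : (forall e, 0 < e -> d a b <= e) -> a = b.
Proof.
  intros Hsmall. apply (metric_zero _ Hd).
  pose proof (metric_nonneg _ Hd a b) as Hnn.
  destruct (Rle_lt_or_eq_dec 0 (d a b) Hnn) as [Hlt|Heq]; [|auto].
  specialize (Hsmall (d a b / 2) ltac:(lra)). lra.
Qed.

Lemma d_converges_unique (x : nat -> X) (a b : X) :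
  d_converges d x a -> d_converges d x b -> a = b.
Proof.
  intros Ha Hb. apply metric_eq_of_le_all. intros e He.
  destruct (Ha (e / 2) ltac:(lra)) as [Na HNa].
  destruct (Hb (e / 2) ltac:(lra)) as [Nb HNb].
  specialize (HNa (Na + Nb)%nat ltac:(lia)).
  specialize (HNb (Na + Nb)%nat ltac:(lia)).
  pose proof (metric_triangle _ Hd a (x (Na + Nb)%nat) b).
  rewrite (metric_sym _ Hd a (x (Na + Nb)%nat)) in *. lra.
Qed.

Lemma d_converges_shift (x : nat -> X) (l : X) :
  d_converges d x l -> d_converges d (fun n => x (S n)) l.
Proof.
  intros Hx e He. destruct (Hx e He) as [N HN].
  exists N; intros n Hn. apply HN; lia.
Qed.

End Metric.

Section WDistance.
Context {X : Type} (d : X -> X -> R) (Rel : X -> X -> Prop) (p : X -> X -> R).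
Hypothesis Hp : is_w_distance d Rel p.

Lemma w_distance_geometric_tail (lam a : R) (x : nat -> X) :
  0 <= lam < 1 -> (forall n, p (x n) (x (S n)) <= lam ^ n * a) ->
  forall n m, (n < m)%nat -> p (x n) (x m) <= a / (1 - lam) * lam ^ n.
Proof.
  intros Hlam Hstep n m Hnm.
  assert (Ha : 0 <= a).
  { pose proof (wdist_nonneg _ _ _ Hp (x 0%nat) (x 1%nat)).
    specialize (Hstep 0%nat). simpl in Hstep. lra. }
  assert (Htelescope : forall k, (1 - lam) * p (x n) (x (n + S k)%nat)
                                 <= a * (lam ^ n - lam ^ (n + S k))).
  { induction k.
    - replace (n + 1)%nat with (S n) by lia.
      specialize (Hstep n). simpl pow. nra.
    - replace (n + S (S k))%nat with (S (n + S k)) by lia.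
      pose proof (wdist_w1 _ _ _ Hp (x n) (x (n + S k)%nat) (x (S (n + S k)))).
      specialize (Hstep (n + S k)%nat).
      simpl pow. nra. }
  replace m with (n + S (m - S n))%nat by lia.
  specialize (Htelescope (m - S n)%nat).
  pose proof (pow_le lam (n + S (m - S n)) ltac:(lra)).
  apply Rmult_le_reg_l with (1 - lam); [lra|].
  replace ((1 - lam) * (a / (1 - lam) * lam ^ n)) with (a * lam ^ n) by (field; lra).
  nra.
Qed.

Lemma w_distance_cauchy (x : nat -> X) :
  (forall e, 0 < e -> exists N, forall m, (N < m)%nat -> p (x N) (x m) <= e) ->
  d_cauchy d x.
Proof.
  intros Htail e He.
  destruct (wdist_w3 _ _ _ Hp (e / 2) ltac:(lra)) as [delta [Hdelta Hw3]].
  destruct (Htail delta Hdelta) as [N HN].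
  exists (S N); intros m n Hm Hn.
  enough (d (x m) (x n) <= e / 2) by lra.
  apply Hw3 with (z := x N); apply HN; lia.
Qed.

Lemma w_distance_limit_le (x : nat -> X) (l z : X) (b : R) :
  rel_preserving Rel x -> d_converges d x l ->
  (exists N, forall m, (N <= m)%nat -> p z (x m) <= b) -> p z l <= b.
Proof.
  intros Hrel Hconv [N HN].
  apply Rnot_lt_le; intros Hgt.
  destruct (wdist_w2 _ _ _ Hp z l x Hrel Hconv (p z l - b) ltac:(lra)) as [M HM].
  specialize (HM (N + M)%nat ltac:(lia)).
  specialize (HN (N + M)%nat ltac:(lia)).
  lra.
Qed.

Lemma w_distance_separates (a b : X) :
  is_metric d -> (forall e, 0 < e -> exists z, p z a <= e /\ p z b <= e) -> a = b.
Proof.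
  intros Hd Hsmall. apply (metric_eq_of_le_all d Hd). intros e He.
  destruct (wdist_w3 _ _ _ Hp e He) as [delta [Hdelta Hw3]].
  destruct (Hsmall delta Hdelta) as [z [Hza Hzb]].
  exact (Hw3 a b z Hza Hzb).
Qed.

End WDistance.

Section PicardOrbit.
Context {X : Type} (T : X -> X).

Definition orbit (x0 : X) (n : nat) : X := Nat.iter n T x0.

Lemma orbit_rel_preserving (Rel : X -> X -> Prop) (x0 : X) :
  T_closed Rel T -> Rel x0 (T x0) -> rel_preserving Rel (orbit x0).
Proof. intros HT Hx0 n; induction n; [exact Hx0|]. apply HT, IHn. Qed.

Lemma orbit_limit_fixed_of_continuous (d : X -> X -> R) (Rel : X -> X -> Prop) (x0 l : X) :
  is_metric d -> rel_continuous d Rel T -> rel_preserving Rel (orbit x0) ->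
  d_converges d (orbit x0) l -> T l = l.
Proof.
  intros Hd Hcont Hrel Hconv.
  apply (d_converges_unique d Hd (fun n => orbit x0 (S n))).
  - exact (Hcont l _ Hrel Hconv).
  - exact (d_converges_shift d _ l Hconv).
Qed.

End PicardOrbit.

Section Contraction.
Context {X : Type} (d : X -> X -> R) (Rel : X -> X -> Prop) (p : X -> X -> R) (T : X -> X).
Hypothesis Hd : is_metric d.
Hypothesis Hp : is_w_distance d Rel p.
Hypothesis HT : T_closed Rel T.
Variable lam : R.
Hypothesis Hlam : 0 <= lam < 1.
Hypothesis Hcontr : forall x y, Rel x y -> p (T x) (T y) <= lam * p x y.
Variable x0 : X.
Hypothesis Hx0 : Rel x0 (T x0).

Let x := orbit T x0.
Let C := p x0 (T x0) / (1 - lam).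

Lemma orbit_step_le (n : nat) : p (x n) (x (S n)) <= lam ^ n * p x0 (T x0).
Proof.
  induction n; [simpl; lra|].
  apply Rle_trans with (lam * p (x n) (x (S n))).
  - apply Hcontr, (orbit_rel_preserving T Rel x0 HT Hx0).
  - simpl pow. rewrite Rmult_assoc. apply Rmult_le_compat_l; lra.
Qed.

Lemma orbit_tail_le (n m : nat) : (n < m)%nat -> p (x n) (x m) <= C * lam ^ n.
Proof. exact (w_distance_geometric_tail d Rel p Hp lam _ x Hlam orbit_step_le n m). Qed.

Lemma orbit_cauchy : d_cauchy d x.
Proof.
  apply (w_distance_cauchy d Rel p Hp). intros e He.
  destruct (geometric_eventually_lt lam C e Hlam He) as [N HN].
  exists N; intros m Hm.
  left. eapply Rle_lt_trans; [apply orbit_tail_le, Hm | apply HN; lia].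
Qed.

Lemma orbit_limit_le (l : X) (n : nat) : d_converges d x l -> p (x n) l <= C * lam ^ n.
Proof.
  intros Hconv.
  apply (w_distance_limit_le d Rel p Hp x l (x n) _
           (orbit_rel_preserving T Rel x0 HT Hx0) Hconv).
  exists (S n); intros m Hm. apply orbit_tail_le; lia.
Qed.

Lemma orbit_limit_fixed_of_self_closed (Y : X -> Prop) (l : X) :
  (forall n, Y (x n)) -> d_self_closed d Rel Y -> d_converges d x l -> T l = l.
Proof.
  intros HY Hsc Hconv.
  pose proof (orbit_rel_preserving T Rel x0 HT Hx0) as Hrel.
  destruct (Hsc x l HY (fun n => conj (Hrel n) (conj (HY n) (HY (S n)))) Hconv)
    as [f [Hf Hfl]].
  symmetry. apply (w_distance_separates d Rel p Hp _ _ Hd). intros e He.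
  destruct (geometric_eventually_lt lam C e Hlam He) as [N HN].
  pose proof (strictly_increasing_ge f Hf N) as HfN.
  destruct (Hfl N) as [Hrel_l _].
  exists (x (S (f N))); split.
  - eapply Rle_trans; [apply orbit_limit_le, Hconv|]. left. apply HN; lia.
  - apply Rle_trans with (lam * p (x (f N)) l); [apply Hcontr, Hrel_l|].
    pose proof (orbit_limit_le l (f N) Hconv).
    specialize (HN (S (f N)) ltac:(lia)). simpl pow in HN. nra.
Qed.

End Contraction.

Theorem theorem2p1 (X : Type) (d : X -> X -> R) (Rel : X -> X -> Prop)
    (p : X -> X -> R) (T : X -> X)
    (Hd : is_metric d)
    (Hp : is_w_distance d Rel p)
    (H13 : exists Y : X -> Prop,
        (forall x, Y (T x)) /\ rel_complete d Rel Y /\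
        (rel_continuous d Rel T \/ d_self_closed d Rel Y))
    (H2a : exists x, Rel x (T x))
    (H2b : T_closed Rel T)
    (H4 : exists lambda, 0 <= lambda < 1 /\
        forall x y, Rel x y -> p (T x) (T y) <= lambda * p x y) :
  exists x, T x = x.
Proof.
  destruct H13 as [Y [HTY [Hcomplete Hcase]]].
  destruct H2a as [x0 Hx0].
  destruct H4 as [lam [Hlam Hcontr]].
  (* Starting from T x0 instead of x0 keeps the whole orbit inside Y. *)
  set (x1 := T x0).
  assert (Hx1 : Rel x1 (T x1)) by (apply H2b, Hx0).
  assert (HY : forall n, Y (orbit T x1 n)) by (intros [|n]; apply HTY).
  pose proof (orbit_rel_preserving T Rel x1 H2b Hx1) as Hrel.
  destruct (Hcomplete (orbit T x1) HY Hrel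
              (orbit_cauchy d Rel p T Hp H2b lam Hlam Hcontr x1 Hx1)) as [l [_ Hconv]].
  exists l.
  destruct Hcase as [Hcont | Hsc].
  - exact (orbit_limit_fixed_of_continuous T d Rel x1 l Hd Hcont Hrel Hconv).
  - exact (orbit_limit_fixed_of_self_closed d Rel p T Hd Hp H2b lam Hlam Hcontr
             x1 Hx1 Y l HY Hsc Hconv).
Qed.
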